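(* Let $X\subset\operatorname{Hol}(\mathbb{D})$ be a Banach space such that (X1) for each $w\in\mathbb{D}$ the map $f\mapsto f(w)$, $X\to\mathbb{C}$, is continuous; (X2) $X$ contains the polynomials and they are dense in $X$; (X3) if $f\in X$ then $zf\in X$. Let $Y\subset X$ be a set such that (Y1) if $g\in X$ and $0<\inf_{\mathbb{D}}|g|\le\sup_{\mathbb{D}}|g|<\infty$, then $g\in Y$; (Y2) for every $\lambda\in\mathbb{T}$, the function $g(z):=z-\lambda$ belongs to $Y$. Let $\Lambda:X\to\mathbb{C}$ be a continuous linear functional such that $\Lambda(1)=1$ and $\Lambda(g)\neq0$ for all $g\in Y$. Then there exists $w\in\mathbb{D}$ such that \[ \Lambda(f)=f(w)\qquad(f\in X). \]
   Context: $\mathbb{D}$ is the open unit disk, $\mathbb{T}$ the unit circle, and $\operatorname{Hol}(\mathbb{D})$ the space of holomorphic functions on $\mathbb{D}$. *)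

From HB Require Import structures.
From mathcomp Require Import all_boot all_order all_algebra.
From mathcomp Require Export complex.
From mathcomp Require Import all_classical all_reals all_analysis.
Import Order.TTheory GRing.Theory Num.Theory numFieldNormedType.Exports.
Local Open Scope ring_scope.
Local Open Scope classical_set_scope.

Definition disk (R : realType) : set R[i] := [set z : R[i] | `|z| < 1].

(* f is holomorphic on A: complex differentiable at every point of A
   (derivable over the field R[i], in direction 1). *)
Definition holomorphic_on (R : realType) (A : set R[i]) (f : R[i] -> R[i]) :=
  forall z, A z -> derivable (f : R[i]^o -> R[i]^o) z 1.

From HB Require Import structures.
From mathcomp Require Import all_boot all_order all_algebra.
From mathcomp Require Import complex ring.
From mathcomp Require Import all_classical all_reals all_analysis.
Import Order.TTheory GRing.Theory Num.Theory numFieldNormedType.Exports.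
Local Open Scope ring_scope.
Local Open Scope classical_set_scope.

(* Restricted to polynomials, Lambda is a linear functional phi with phi 1 = 1
   that does not vanish on polynomials bounded away from 0 on D; (Y1) and (Y2)
   applied to X - w force w := phi X into D.  The Gleason-Kahane-Zelazko
   argument makes phi multiplicative: if phi a = 0 and |a| <= 1 on D, then for
   every N the polynomial lam |-> phi ((1 - lam a)^N) has no zero in D, and
   comparing its second coefficient with the product over its roots gives
   N |phi (a^2)| <= 1.  Hence phi p = p(w), and Lambda is evaluation at w by
   continuity and density of the polynomials. *)

Lemma norm_horner_le_sum {C : numDomainType} (p : {poly C}) (z : C) :
  `|z| <= 1 -> `|p.[z]| <= \sum_(i < size p) `|p`_i|.
Proof.
move=> z_le1; rewrite horner_coef; apply: le_trans (ler_norm_sum _ _ _) _.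
apply: ler_sum => i _; rewrite normrM normrX.
by rewrite ler_piMr // exprn_ile1.
Qed.

Lemma factor_root_1subX {F : fieldType} {p : {poly F}} {r : F} :
  p != 0 -> r != 0 -> root p r ->
  exists2 q : {poly F}, p = q * (1 - r^-1 *: 'X) & (size q).+1 = size p.
Proof.
move=> p_neq0 r_neq0 /factor_theorem[q p_eq]; exists ((- r) *: q).
  rewrite p_eq -scalerAl scalerAr scalerBr scalerA mulNr mulfV // scaleN1r.
  by rewrite opprK addrC scaleNr alg_polyC.
rewrite size_scale ?oppr_eq0 // p_eq.
rewrite size_Mmonic ?monicXsubC ?size_XsubC ?addn2 //.
by apply: contraNneq p_neq0 => q0; rewrite p_eq q0 mul0r.
Qed.

Lemma coef2_mul_1subX (C : comNzRingType) (q : {poly C}) (s : C) :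
  q`_0 = 1 ->
  2 * (q * (1 - s *: 'X))`_2 - (q * (1 - s *: 'X))`_1 ^+ 2 =
    2 * q`_2 - q`_1 ^+ 2 - s ^+ 2.
Proof.
move=> q0; rewrite mulrBr mulr1 -scalerAr !coefB !coefZ !coefMX /= q0; ring.
Qed.

(* p = \prod_i (1 - s_i X), |s_i| <= 1, has 2 p_2 - p_1^2 = - \sum_i s_i^2. *)
Lemma zero_free_poly_coef_bound
    {C : numClosedFieldType} {n : nat} {p : {poly C}} :
  p`_0 = 1 -> (size p <= n.+1)%N -> (forall z, `|z| < 1 -> ~~ root p z) ->
  `|2 * p`_2 - p`_1 ^+ 2| <= n%:R.
Proof.
elim: n p => [|n IHn] p p0 size_p p_zero_free.
  by rewrite !nth_default ?(leq_trans size_p) // expr0n mulr0 subr0 normr0.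
have [size_p' | size_p_gt] := leqP (size p) n.+1.
  by apply: le_trans (IHn p p0 size_p' p_zero_free) _; rewrite ler_nat.
have p_neq0 : p != 0 by rewrite -size_poly_eq0 -lt0n (leq_trans _ size_p_gt).
have [r root_r] : exists r, root p r.
  by apply/closed_rootP; rewrite neq_ltn (leq_trans _ size_p_gt) ?orbT.
have r_ge1 : 1 <= `|r|.
  rewrite real_leNgt ?normr_real ?real1 //.
  by apply: contraL root_r; apply: p_zero_free.
have r_neq0 : r != 0 by rewrite -normr_gt0 (lt_le_trans ltr01).
have [q p_eq size_q] := factor_root_1subX p_neq0 r_neq0 root_r.
have q0 : q`_0 = 1.
  by move: p0; rewrite p_eq coef0M coefB coefZ coefX coefC /= mulr0 subr0 mulr1.
rewrite p_eq coef2_mul_1subX // -[n.+1]addn1 natrD.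
apply: le_trans (ler_normB _ _) _; apply: lerD.
  apply: IHn => // [|z /p_zero_free]; first by rewrite -ltnS size_q.
  by rewrite p_eq rootM negb_or => /andP[].
by rewrite normrX exprn_ile1 // normfV invf_le1 // (lt_le_trans ltr01).
Qed.

Lemma binomial_coef_bound {C : numClosedFieldType} (b : nat -> C) (N : nat) :
  b 0%N = 1 -> b 1%N = 0 ->
  (forall lam, `|lam| < 1 ->
     \sum_(k < N.+2) 'C(N.+1, k)%:R * (- lam) ^+ k * b k != 0) ->
  `|b 2%N| * N%:R <= 1.
Proof.
case: N => [|N] b0 b1 zero_free; first by rewrite mulr0 ler01.
pose p := \poly_(k < N.+3) ('C(N.+2, k)%:R * (-1) ^+ k * b k).
have p_zero_free z : `|z| < 1 -> ~~ root p z.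
  move=> /zero_free; apply: contraNN => /rootP pz0.
  apply/eqP; rewrite -[RHS]pz0.
  rewrite horner_poly; apply: eq_bigr => k _.
  by rewrite [(- z) ^+ k]exprNn mulrA mulrAC.
have p0 : p`_0 = 1 by rewrite coef_poly /= b0 bin0 expr0 !mulr1.
have := zero_free_poly_coef_bound p0 (size_poly _ _) p_zero_free.
rewrite !coef_poly /= b1 mulr0 expr0n subr0 sqrrN expr1n mulr1 mulrA -natrM.
have -> : (2 * 'C(N.+2, 2) = N.+2 * N.+1)%N.
  by rewrite mulnC -[2%N in LHS]/(2`!) bin_ffact ffactnS ffactn1.
rewrite natrM !normrM !normr_nat -mulrA -[X in _ <= X -> _]mulr1.
by rewrite ler_pM2l ?ltr0n // mulrC.
Qed.

Lemma complex_eq0_of_norm_nat_le1 (R : realType) (x : R[i]) :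
  (forall n, `|x| * n%:R <= 1) -> x = 0.
Proof.
move=> x_small; apply/normr0_eq0; move: x_small; rewrite normc_def.
set t := Num.sqrt _ => t_small; congr (_%:C)%C; apply/eqP.
rewrite eq_le sqrtr_ge0 andbT leNgt; apply/negP => t_gt0.
have t_inv_ge0 : 0 <= t^-1 by rewrite invr_ge0 ltW.
have := t_small (Num.Def.archi_bound t^-1).
rewrite -(rmorph_nat (real_complex R)) -rmorphM lecR.
apply/negP; rewrite -ltNge.
by rewrite -ltr_pdivrMl // mulr1 archi_boundP.
Qed.

Section ZeroFreePolyFunctional.

Variable R : realType.
Variable phi : {poly R[i]} -> R[i].
Hypothesis phi_linear : linear_for *%R phi.
HB.instance Definition _ :=
  GRing.isLinear.Build R[i] {poly R[i]} R[i] *%R phi phi_linear.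

Hypothesis phi1 : phi 1 = 1.
Hypothesis phi_neq0_bounded_below : forall (p : {poly R[i]}) (m : R[i]),
  0 < m -> (forall z, `|z| < 1 -> m <= `|p.[z]|) -> phi p != 0.
Hypothesis phi_XsubC_neq0 :
  forall lam : R[i], `|lam| = 1 -> phi ('X - lam%:P) != 0.

Lemma phiC (c : R[i]) : phi c%:P = c.
Proof. by rewrite -alg_polyC linearZ /= phi1 mulr1. Qed.

Lemma phiX_lt1 : `|phi 'X| < 1.
Proof.
set w := phi 'X; rewrite real_ltNge ?normr_real ?real1 //; apply/negP => w_ge1.
suff : phi ('X - w%:P) != 0 by rewrite linearB /= phiC subrr eqxx.
move: w_ge1; rewrite le_eqVlt => /orP[/eqP w1 | w_gt1].
  exact: phi_XsubC_neq0 (esym w1).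
apply: (phi_neq0_bounded_below _ (`|w| - 1)); first by rewrite subr_gt0.
move=> z z_lt1; rewrite hornerXsubC distrC; apply: le_trans (lerB_dist _ _).
by rewrite lerB // ltW.
Qed.

Lemma phi_binomial (a : {poly R[i]}) (lam : R[i]) (N : nat) :
  phi ((1 - lam *: a) ^+ N) =
    \sum_(k < N.+1) 'C(N, k)%:R * (- lam) ^+ k * phi (a ^+ k).
Proof.
rewrite addrC exprD1n linear_sum; apply: eq_bigr => k _.
by rewrite linearMn -scaleNr exprZn linearZ /= mulr_natl mulrnAl.
Qed.

Lemma phi_expr2_eq0_of_le1 (a : {poly R[i]}) :
  phi a = 0 -> (forall z, `|z| < 1 -> `|a.[z]| <= 1) -> phi (a ^+ 2) = 0.
Proof.
move=> phi_a0 a_le1; apply: complex_eq0_of_norm_nat_le1 => N.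
apply: (binomial_coef_bound (fun k => phi (a ^+ k))) => [|| lam lam_lt1].
- by rewrite expr0 phi1.
- by rewrite expr1 phi_a0.
rewrite -phi_binomial; apply: (phi_neq0_bounded_below _ ((1 - `|lam|) ^+ N.+1)).
  by rewrite exprn_gt0 // subr_gt0.
move=> z /a_le1 az_le1.
rewrite horner_exp hornerD hornerN hornerZ hornerC normrX.
apply: lerXn2r; rewrite ?nnegrE ?normr_ge0 ?subr_ge0 ?(ltW lam_lt1) //.
apply: le_trans (lerB_dist _ _); rewrite normr1 lerB // normrM.
by rewrite ler_piMr.
Qed.

Lemma phi_expr2_eq0 (a : {poly R[i]}) : phi a = 0 -> phi (a ^+ 2) = 0.
Proof.
move=> phi_a0; pose M := \sum_(i < size a) `|a`_i| + 1.
have M_gt0 : 0 < M by rewrite ltr_wpDl // sumr_ge0.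
have -> : a = M *: (M^-1 *: a) by rewrite scalerA mulfV ?gt_eqF // scale1r.
rewrite exprZn linearZ /= phi_expr2_eq0_of_le1 ?mulr0 //.
  by rewrite linearZ /= phi_a0 mulr0.
move=> z z_lt1; rewrite hornerZ normrM normfV (gtr0_norm M_gt0).
rewrite ler_pdivrMl // mulr1.
by rewrite (le_trans (norm_horner_le_sum a z (ltW z_lt1))) // lerDl.
Qed.

Lemma phi_expr2 (p : {poly R[i]}) : phi (p ^+ 2) = phi p ^+ 2.
Proof.
set c := phi p.
have phi_p_subC : phi (p - c%:P) = 0 by rewrite linearB /= phiC subrr.
have := phi_expr2_eq0 _ phi_p_subC.
rewrite sqrrB linearD linearB linearMn /= mulrC mul_polyC linearZ /=.
rewrite -polyC_exp !phiC => phi_sqr_eq0.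
by apply/eqP; rewrite -subr_eq0 -[0]phi_sqr_eq0; apply/eqP; ring.
Qed.

Lemma phiM (p q : {poly R[i]}) : phi (p * q) = phi p * phi q.
Proof.
have := phi_expr2 (p + q).
rewrite sqrrD !linearD /= !phi_expr2 sqrrD => /addIr/addrI.
by rewrite -mulr2n => /eqP; rewrite eqrMn2r => /eqP.
Qed.

Lemma phi_horner (p : {poly R[i]}) : phi p = p.[phi 'X].
Proof.
elim/poly_ind: p => [|p c IHp]; first by rewrite linear0 horner0.
by rewrite linearD /= phiM phiC IHp hornerMXaddC.
Qed.

End ZeroFreePolyFunctional.

Lemma continuous_eq_on_dense (K : numFieldType) (T : topologicalType)
    (U : normedModType K) (f g : T -> U) (S : set T) :
  continuous f -> continuous g -> closure S = setT ->
  (forall x, S x -> f x = g x) -> f =1 g.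
Proof.
move=> f_cont g_cont S_dense fg_S x.
have eq_closed : closed ((fun y => f y - g y) @^-1` [set 0]).
  apply: preimage_closed => [y _|].
    exact: continuousB (f_cont y) (g_cont y).
  exact/accessible_closed_set1/hausdorff_accessible/norm_hausdorff.
have : closure S `<=` (fun y => f y - g y) @^-1` [set 0].
  rewrite closure_id in eq_closed; rewrite eq_closed.
  by apply: closureS => y /fg_S /= ->; rewrite subrr.
by rewrite S_dense => /(_ x I) /eqP; rewrite subr_eq0 => /eqP.
Qed.

Theorem theorem7p1 (R : realType) (V : completeNormedModType R[i])
  (iota : V -> R[i] -> R[i]) (Y : set V) (Lam : V -> R[i])
  (* X is a linear subspace of Hol(D) *)
  (iota_hol : forall u, holomorphic_on R (disk R) (iota u))
  (iota_lin : forall (a : R[i]) (u v : V) z, disk R z ->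
      iota (a *: u + v) z = a * iota u z + iota v z)
  (iota_inj : forall u v : V, (forall z, disk R z -> iota u z = iota v z) -> u = v)
  (* (X1) *)
  (X1 : forall w, disk R w -> continuous (fun u : V => (iota u w : R[i]^o)))
  (* (X2) *)
  (X2poly : forall p : {poly R[i]}, exists u : V, forall z, disk R z -> iota u z = p.[z])
  (X2dense : closure [set u : V | exists p : {poly R[i]},
                        forall z, disk R z -> iota u z = p.[z]] = setT)
  (* (X3) *)
  (X3 : forall u : V, exists v : V, forall z, disk R z -> iota v z = z * iota u z)
  (* Y is a subset of X with (Y1), (Y2) *)
  (Y1 : forall g : V, (exists m M : R[i], 0 < m /\
          forall z, disk R z -> m <= `|iota g z| <= M) -> Y g)
  (Y2 : forall lam : R[i], `|lam| = 1 ->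
          forall g : V, (forall z, disk R z -> iota g z = z - lam) -> Y g)
  (* Lambda is a continuous linear functional *)
  (Lam_lin : forall (a : R[i]) (u v : V), Lam (a *: u + v) = a * Lam u + Lam v)
  (Lam_cont : continuous (Lam : V -> R[i]^o))
  (Lam1 : forall u : V, (forall z, disk R z -> iota u z = 1) -> Lam u = 1)
  (LamY : forall g : V, Y g -> Lam g <> 0) :
  exists w : R[i], disk R w /\ forall u : V, Lam u = iota u w.
Proof.
have [P PE] := choice X2poly.
have P_linear a p q : P (a *: p + q) = a *: P p + P q.
  by apply: iota_inj => z Dz; rewrite iota_lin // !PE // hornerD hornerZ.
pose phi p := Lam (P p).
have phi_linear : linear_for *%R phi.
  by move=> a p q; rewrite /phi P_linear Lam_lin.
have phi1 : phi 1 = 1 by apply: Lam1 => z Dz; rewrite PE // hornerC.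
have phi_neq0 p : Y (P p) -> phi p != 0 by move=> /LamY/eqP.
have phi_neq0_bounded_below p m :
    0 < m -> (forall z, `|z| < 1 -> m <= `|p.[z]|) -> phi p != 0.
  move=> m_gt0 p_ge_m; apply/phi_neq0/Y1; exists m, (\sum_(i < size p) `|p`_i|).
  by split=> // z Dz; rewrite PE // p_ge_m // norm_horner_le_sum // ltW.
have phi_XsubC_neq0 lam : `|lam| = 1 -> phi ('X - lam%:P) != 0.
  by move=> lam1; apply/phi_neq0/(Y2 _ lam1) => z Dz; rewrite PE // hornerXsubC.
have Dw : disk R (phi 'X).
  exact: phiX_lt1 phi_linear phi1 phi_neq0_bounded_below phi_XsubC_neq0.
exists (phi 'X); split=> //.
apply: continuous_eq_on_dense Lam_cont (X1 _ Dw) X2dense _ => u [p u_eq_p].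
have -> : u = P p by apply: iota_inj => z Dz; rewrite u_eq_p // PE.
by rewrite PE //; exact: phi_horner phi_linear phi1 phi_neq0_bounded_below p.
Qed.
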